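(* Let $\mathbf{C}$ be a category. There is a one-to-one correspondence $h$ from the set of lax functors $\mathbf{C}\to\mathbf{Rel}$ to the set of faithful functors with codomain $\mathbf{C}$.
   Context: $\mathbf{Rel}$ is the 2-category whose objects are sets, whose 1-morphisms $X\to Y$ are binary relations $\mathcal{R}\subseteq X\times Y$, and whose 2-morphisms are inclusions of relations; composition of $\mathcal{R}\colon X\to Y$ and $\mathcal{R}'\colon Y\to Z$ is $\mathcal{R}'\circ\mathcal{R}=\{(x,z)\mid \exists y,\ (x,y)\in\mathcal{R},\ (y,z)\in\mathcal{R}'\}$. A lax functor $F\colon\mathbf{C}\to\mathbf{Rel}$ from a 1-category $\mathbf{C}$ assigns to each object $X$ a set $F(X)$ and to each morphism $f\colon X\to Y$ a relation $F(f)\colon F(X)\to F(Y)$ such that for every composable pair $f\colon X\to Y$, $g\colon Y\to Z$, the relation $F(g)\circ F(f)$ is included in $F(gf)$. The correspondence is given as follows: to a lax functor $S$ one associates the category $\mathbf{H(S)}$ whose objects are the elements $s\in S(e)$ for objects $e$ of $\mathbf{C}$ and whose morphisms are triples $(s,g,s')$ with $g\colon e\to e'$ in $\mathbf{C}$, $s\in S(e)$, $s'\in S(e')$ and $(s,s')\in S(g)$, composed by $(s',g',s'')(s,g,s')=(s,g'g,s'')$, together with the functor $h(S)\colon\mathbf{H(S)}\to\mathbf{C}$ sending $s\in S(e)$ to $e$ and $(s,g,s')$ to $g$; conversely a faithful functor $k\colon\mathbf{K}\to\mathbf{C}$ corresponds to the lax functor $S'$ with $S'(e)$ the set of objects of $\mathbf{K}$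 mapped to $e$ by $k$, and $(s,s')\in S'(g)$ iff there is $f\colon s\to s'$ in $\mathbf{K}$ with $k(f)=g$. *)

From Stdlib Require Import ProofIrrelevance.

Set Implicit Arguments.
Set Universe Polymorphism.

Record Category := {
  ob : Type;
  hom : ob -> ob -> Type;
  idm : forall a, hom a a;
  comp : forall a b d, hom b d -> hom a b -> hom a d;
  comp_id_l : forall a b (f : hom a b), comp (idm b) f = f;
  comp_id_r : forall a b (f : hom a b), comp f (idm a) = f;
  comp_assoc : forall a b c d (f : hom a b) (g : hom b c) (h : hom c d),
      comp h (comp g f) = comp (comp h g) f
}.
Arguments idm {c0} a.
Arguments comp {c0 a b d} _ _.

Record Functor (K C : Category) := {
  fob : ob K -> ob C;
  fhom : forall a b, hom K a b -> hom C (fob a) (fob b);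
  fhom_id : forall a, fhom a a (idm a) = idm (fob a);
  fhom_comp : forall a b c (f : hom K a b) (g : hom K b c),
      fhom a c (comp g f) = comp (fhom b c g) (fhom a b f)
}.
Arguments fob {K C} f0 _.
Arguments fhom {K C} f0 {a b} _.

Definition faithful (K C : Category) (k : Functor K C) : Prop :=
  forall a b (f g : hom K a b), fhom k f = fhom k g -> f = g.

(** Lax functors C -> Rel: sets S(e), relations S(g), with the lax
    composition inclusion S(g') o S(g) ⊆ S(g' g) and the lax unit
    inclusion id ⊆ S(id_e). *)
Record LaxFunctor (C : Category) := {
  lob : ob C -> Type;
  lrel : forall a b, hom C a b -> lob a -> lob b -> Prop;
  lax_id : forall a (x : lob a), lrel (idm a) x x;
  lax_comp : forall a b c (f : hom C a b) (g : hom C b c) x y z,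
      lrel f x y -> lrel g y z -> lrel (comp g f) x z
}.
Arguments lob {C} l _.
Arguments lrel {C} l {a b} _ _ _.

Definition is_bij (A B : Type) (f : A -> B) : Prop :=
  exists g : B -> A, (forall x, g (f x) = x) /\ (forall y, f (g y) = y).

Definition lax_iso (C : Category) (S T : LaxFunctor C) : Prop :=
  exists phi : forall e, lob S e -> lob T e,
    (forall e, is_bij (phi e)) /\
    (forall a b (g : hom C a b) x y, lrel S g x y <-> lrel T g (phi a x) (phi b y)).

Definition cast_hom {C : Category} (a a' b b' : ob C) (ea : a = a') (eb : b = b')
  (f : hom C a b) : hom C a' b' :=
  match ea in _ = a'' return hom C a'' b' with
  | eq_refl => match eb in _ = b'' return hom C a b'' with
               | eq_refl => f end end.

Definition iso_over (C K K' : Category) (k : Functor K C) (k' : Functor K' C) : Prop :=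
  exists F : Functor K K',
    is_bij (fob F) /\ (forall a b, is_bij (@fhom _ _ F a b)) /\
    exists eob : forall x, fob k' (fob F x) = fob k x,
      forall a b (f : hom K a b),
        cast_hom (eob a) (eob b) (fhom k' (fhom F f)) = fhom k f.

Section H.
Variables (C : Category) (S : LaxFunctor C).

Definition Hob := { e : ob C & lob S e }.
Definition Hhom (x y : Hob) : Type :=
  { g : hom C (projT1 x) (projT1 y) | lrel S g (projT2 x) (projT2 y) }.
Definition Hid (x : Hob) : Hhom x x := exist _ (idm (projT1 x)) (@lax_id C S (projT1 x) (projT2 x)).
Definition Hcomp (x y z : Hob) (g : Hhom y z) (f : Hhom x y) : Hhom x z :=
  exist _ (comp (proj1_sig g) (proj1_sig f))
    (@lax_comp C S _ _ _ _ _ _ _ _ (proj2_sig f) (proj2_sig g)).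

Lemma Hhom_eq (x y : Hob) (u v : Hhom x y) : proj1_sig u = proj1_sig v -> u = v.
Proof.
  destruct u as [u pu], v as [v pv]; simpl; intros ->.
  f_equal; apply proof_irrelevance.
Qed.

Definition HS : Category.
Proof.
  refine {| ob := Hob; hom := Hhom; idm := Hid; comp := Hcomp |};
  intros; apply Hhom_eq; simpl.
  - apply comp_id_l.
  - apply comp_id_r.
  - apply comp_assoc.
Defined.

Definition hS : Functor HS C.
Proof.
  refine {| fob := fun x : ob HS => projT1 x;
            fhom := fun x y (f : hom HS x y) => proj1_sig f |};
  reflexivity.
Defined.
End H.

(* A morphism (s, g, s') of H(S) is determined by g, so h(S) is faithful.
   Conversely, a faithful k : K -> C is recovered from its fibre lax functor
   S'(e) = k^-1(e), with (s, s') in S'(g) iff g lifts along k to some s -> s':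
   faithfulness makes that lift unique, so sending (s, g, s') to it is an
   isomorphism H(S') -> K over C.  Finally, an isomorphism of lax functors
   induces an isomorphism over C fibrewise, and an isomorphism over C preserves
   fibres, so it restricts to bijections S(e) -> T(e) that preserve and
   reflect the relations, because S(g) relates s to s' exactly when g is the
   image of a morphism s -> s' of H(S). *)
From Stdlib Require Import ClassicalEpsilon Eqdep.
Set Implicit Arguments.

Lemma cast_hom_inj {C : Category} (a a' b b' : ob C) (ea : a = a') (eb : b = b')
  (f g : hom C a b) : cast_hom ea eb f = cast_hom ea eb g -> f = g.
Proof. now destruct ea, eb. Qed.

Lemma cast_hom_idm {C : Category} (a a' : ob C) (ea : a = a') :
  cast_hom ea ea (idm a) = idm a'.
Proof. now destruct ea. Qed.

Lemma cast_hom_comp {C : Category} (a b c a' b' c' : ob C)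
  (ea : a = a') (eb : b = b') (ec : c = c') (f : hom C a b) (g : hom C b c) :
  cast_hom ea ec (comp g f) = comp (cast_hom eb ec g) (cast_hom ea eb f).
Proof. now destruct ea, eb, ec. Qed.

Lemma existT_eq_rect (I : Type) (A : I -> Type) (x : sigT A) (i : I) (e : projT1 x = i) :
  existT A i (eq_rect _ A (projT2 x) i e) = x.
Proof. now destruct e, x. Qed.

Lemma is_bij_family_inverse {I : Type} {A B : I -> Type} {f : forall i, A i -> B i} :
  (forall i, is_bij (f i)) ->
  exists g : forall i, B i -> A i,
    (forall i a, g i (f i a) = a) /\ (forall i b, f i (g i b) = b).
Proof.
  intro bij_f.
  exists (fun i => proj1_sig (constructive_indefinite_description _ (bij_f i))).
  split; intro i; destruct (constructive_indefinite_description _ (bij_f i)) as [g [gK fK]];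
    assumption.
Qed.

Lemma is_bij_sigT_map {I : Type} {A B : I -> Type} {f : forall i, A i -> B i} :
  (forall i, is_bij (f i)) ->
  is_bij (fun x : sigT A => existT B (projT1 x) (f _ (projT2 x))).
Proof.
  intro bij_f; destruct (is_bij_family_inverse bij_f) as [g [gK fK]].
  exists (fun y : sigT B => existT A (projT1 y) (g _ (projT2 y))).
  split; intros [i c]; simpl; [rewrite gK | rewrite fK]; reflexivity.
Qed.

Definition fibre_map (I : Type) (A B : I -> Type) (Phi : sigT A -> sigT B)
  (ePhi : forall x, projT1 (Phi x) = projT1 x) (i : I) (a : A i) : B i :=
  eq_rect _ B (projT2 (Phi (existT A i a))) i (ePhi _).

Lemma existT_fibre_map (I : Type) (A B : I -> Type) (Phi : sigT A -> sigT B)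
  (ePhi : forall x, projT1 (Phi x) = projT1 x) (i : I) (a : A i) :
  existT B i (fibre_map Phi ePhi i a) = Phi (existT A i a).
Proof. apply existT_eq_rect. Qed.

Lemma fibre_map_cancel (I : Type) (A B : I -> Type)
  (Phi : sigT A -> sigT B) (Psi : sigT B -> sigT A)
  (ePhi : forall x, projT1 (Phi x) = projT1 x) (ePsi : forall y, projT1 (Psi y) = projT1 y) :
  (forall x, Psi (Phi x) = x) ->
  forall i a, fibre_map Psi ePsi i (fibre_map Phi ePhi i a) = a.
Proof.
  intros PhiK i a; apply inj_pair2 with (P := A).
  now rewrite existT_fibre_map, existT_fibre_map, PhiK.
Qed.

Lemma is_bij_fibre_map (I : Type) (A B : I -> Type) (Phi : sigT A -> sigT B)
  (ePhi : forall x, projT1 (Phi x) = projT1 x) :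
  is_bij Phi -> forall i, is_bij (fibre_map Phi ePhi i).
Proof.
  intros [Psi [PhiK PsiK]] i.
  assert (ePsi : forall y, projT1 (Psi y) = projT1 y).
  { intro y; rewrite <- (ePhi (Psi y)), PsiK; reflexivity. }
  exists (fibre_map Psi ePsi i); split; apply fibre_map_cancel; assumption.
Qed.

Lemma lrel_eq_rect_iff (C : Category) (S : LaxFunctor C) (z w : Hob S) (a b : ob C)
  (ea : projT1 z = a) (eb : projT1 w = b) (g : hom C a b) :
  lrel S g (eq_rect _ (lob S) (projT2 z) a ea) (eq_rect _ (lob S) (projT2 w) b eb) <->
  exists h : @Hhom _ S z w, cast_hom ea eb (proj1_sig h) = g.
Proof.
  destruct ea, eb; simpl; split.
  - intro rel_g; now exists (exist _ g rel_g).
  - intros [h <-]; exact (proj2_sig h).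
Qed.

Lemma faithful_hS (C : Category) (S : LaxFunctor C) : faithful (hS S).
Proof. intros x y f g; apply Hhom_eq. Qed.

Section LaxIsoToIsoOver.
Variables (C : Category) (S T : LaxFunctor C) (phi : forall e, lob S e -> lob T e).
Hypothesis phi_rel :
  forall a b (g : hom C a b) x y, lrel S g x y <-> lrel T g (phi a x) (phi b y).

Definition H_map_ob (z : Hob S) : Hob T := existT _ (projT1 z) (phi _ (projT2 z)).

Definition H_map_hom (z w : Hob S) (h : @Hhom _ S z w) : @Hhom _ T (H_map_ob z) (H_map_ob w) :=
  exist _ (proj1_sig h) (proj1 (phi_rel _ _ _ _ _) (proj2_sig h)).

Definition H_map : Functor (HS S) (HS T).
Proof.
  refine {| fob := H_map_ob : ob (HS S) -> ob (HS T); fhom := H_map_hom |};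
    intros; apply Hhom_eq; reflexivity.
Defined.

Lemma is_bij_H_map_hom (z w : Hob S) : is_bij (@H_map_hom z w).
Proof.
  exists (fun h : @Hhom _ T (H_map_ob z) (H_map_ob w) =>
            exist _ (proj1_sig h) (proj2 (phi_rel _ _ _ _ _) (proj2_sig h)) : @Hhom _ S z w).
  split; intro; apply Hhom_eq; reflexivity.
Qed.

Lemma iso_over_H_map : (forall e, is_bij (phi e)) -> iso_over (hS S) (hS T).
Proof.
  intro bij_phi; exists H_map; split; [|split].
  - exact (is_bij_sigT_map bij_phi).
  - exact is_bij_H_map_hom.
  - now exists (fun x => eq_refl).
Qed.
End LaxIsoToIsoOver.

Lemma iso_over_of_lax_iso (C : Category) (S T : LaxFunctor C) :
  lax_iso S T -> iso_over (hS S) (hS T).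
Proof. intros [phi [bij_phi phi_rel]]; exact (iso_over_H_map S T phi phi_rel bij_phi). Qed.

Section IsoOverToLaxIso.
Variables (C : Category) (S T : LaxFunctor C) (F : Functor (HS S) (HS T)).
Variable eF : forall x, projT1 (fob F x) = projT1 x.
Hypothesis F_over : forall z w (h : @Hhom _ S z w),
  cast_hom (eF z) (eF w) (proj1_sig (fhom F h)) = proj1_sig h.
Hypothesis fhom_F_surj : forall z w (h' : @Hhom _ T (fob F z) (fob F w)),
  exists h : @Hhom _ S z w, fhom F h = h'.

Definition fibre_F : forall e, lob S e -> lob T e :=
  fibre_map (fob F : Hob S -> Hob T) eF.

Lemma fibre_F_rel a b (g : hom C a b) x y :
  lrel S g x y <-> lrel T g (fibre_F a x) (fibre_F b y).
Proof.
  rewrite (lrel_eq_rect_iff (existT _ a x) (existT _ b y) eq_refl eq_refl g).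
  unfold fibre_F, fibre_map; rewrite lrel_eq_rect_iff; split.
  - intros [h <-]; exists (fhom F h); exact (F_over h).
  - intros [h' <-]; destruct (fhom_F_surj _ _ h') as [h <-]; exists h.
    exact (eq_sym (F_over h)).
Qed.
End IsoOverToLaxIso.

Lemma lax_iso_of_iso_over (C : Category) (S T : LaxFunctor C) :
  iso_over (hS S) (hS T) -> lax_iso S T.
Proof.
  intros [F [bij_F [bij_fhom [eF F_over]]]].
  exists (fibre_F F eF); split.
  - exact (is_bij_fibre_map eF bij_F).
  - apply fibre_F_rel; [exact F_over|].
    intros z w h'; destruct (bij_fhom z w) as [inv [_ inv_K]].
    now exists (inv h').
Qed.

Section FibreLax.
Variables (C K : Category) (k : Functor K C).

Definition fibre_rel (a b : ob C) (g : hom C a b)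
  (x : { s : ob K | fob k s = a }) (y : { s : ob K | fob k s = b }) : Prop :=
  exists f : hom K (proj1_sig x) (proj1_sig y),
    cast_hom (proj2_sig x) (proj2_sig y) (fhom k f) = g.

Definition fibre_lax : LaxFunctor C.
Proof.
  refine {| lob := fun e => { s : ob K | fob k s = e }; lrel := fibre_rel |}.
  - intros a [x <-]; exists (idm x); apply fhom_id.
  - intros a b c f g [x <-] [y <-] [z <-] [u <-] [v <-].
    exists (comp v u); apply fhom_comp.
Defined.

Hypothesis k_faithful : faithful k.

Definition fibre_lift (z w : Hob fibre_lax) (h : @Hhom _ fibre_lax z w) :
  hom K (proj1_sig (projT2 z)) (proj1_sig (projT2 w)) :=
  proj1_sig (constructive_indefinite_description _ (proj2_sig h)).

Lemma fibre_lift_spec (z w : Hob fibre_lax) (h : @Hhom _ fibre_lax z w) :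
  cast_hom (proj2_sig (projT2 z)) (proj2_sig (projT2 w)) (fhom k (fibre_lift h))
  = proj1_sig h.
Proof. unfold fibre_lift; now destruct constructive_indefinite_description. Qed.

Lemma fibre_lift_unique (z w : Hob fibre_lax) (h : @Hhom _ fibre_lax z w)
  (f : hom K (proj1_sig (projT2 z)) (proj1_sig (projT2 w))) :
  cast_hom (proj2_sig (projT2 z)) (proj2_sig (projT2 w)) (fhom k f) = proj1_sig h ->
  fibre_lift h = f.
Proof.
  intro f_lifts; apply k_faithful, (cast_hom_inj (proj2_sig (projT2 z)) (proj2_sig (projT2 w))).
  now rewrite f_lifts, fibre_lift_spec.
Qed.

Definition fibre_comparison : Functor (HS fibre_lax) K.
Proof.
  refine {| fob := fun z : ob (HS fibre_lax) => proj1_sig (projT2 z);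
            fhom := fibre_lift |}.
  - intro z; apply fibre_lift_unique.
    rewrite fhom_id; apply cast_hom_idm.
  - intros z w v f g; apply fibre_lift_unique.
    rewrite fhom_comp, (cast_hom_comp _ (proj2_sig (projT2 w))), !fibre_lift_spec.
    reflexivity.
Defined.

Lemma iso_over_fibre_comparison : iso_over (hS fibre_lax) k.
Proof.
  exists fibre_comparison; split; [|split].
  - exists (fun x : ob K => existT _ (fob k x) (exist _ x eq_refl) : Hob fibre_lax).
    split; [intros [e [x <-]] | intro x]; reflexivity.
  - intros z w.
    exists (fun f => exist _ (cast_hom (proj2_sig (projT2 z)) (proj2_sig (projT2 w)) (fhom k f))
                       (ex_intro _ f eq_refl) : @Hhom _ fibre_lax z w).
    split.
    + intro h; apply Hhom_eq, fibre_lift_spec.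
    + intro f; now apply fibre_lift_unique.
  - exists (fun z : Hob fibre_lax => proj2_sig (projT2 z)).
    intros z w; apply fibre_lift_spec.
Qed.
End FibreLax.

Theorem mainTheorem5 (C : Category) :
  (forall S : LaxFunctor C, faithful (hS S)) /\
  (forall S T : LaxFunctor C, lax_iso S T -> iso_over (hS S) (hS T)) /\
  (forall S T : LaxFunctor C, iso_over (hS S) (hS T) -> lax_iso S T) /\
  (forall (K : Category) (k : Functor K C), faithful k ->
     exists S : LaxFunctor C, iso_over (hS S) k).
Proof.
  split; [apply faithful_hS|].
  split; [apply iso_over_of_lax_iso|].
  split; [apply lax_iso_of_iso_over|].
  intros K k k_faithful; exists (fibre_lax k).
  exact (iso_over_fibre_comparison k_faithful).
Qed.
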